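(* Assume $q\neq0$. For all integers $n$ and $k$, $$h_{n+k+1}^2-q^{2k+1}h_{n-k}^2=d^2u_{2k+1}\left[\left(b^2-a^2q\right)u_{2n+1}-aq\left(2b-ap\right)u_{2n}\right].$$
   Context: Let $p,q,a,b$ be complex numbers with $q\neq0$, and let $d^2=p^2-4q$. The sequence $(u_n)$ is defined by $u_0=0$, $u_1=1$, $u_n=pu_{n-1}-qu_{n-2}$. The Horadam-Lucas sequence $(h_n)$ is defined by $h_0=2b-ap$, $h_1=bp-2aq$, $h_n=ph_{n-1}-qh_{n-2}$. Both are extended to all integer indices by $x_{n-2}=(px_{n-1}-x_n)/q$. *)

From HB Require Import structures.
From mathcomp Require Import all_boot all_order all_algebra.
From mathcomp Require Import complex.
From mathcomp Require Import Rstruct.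
From Stdlib Require Import Rdefinitions.
Set Implicit Arguments. Unset Strict Implicit. Unset Printing Implicit Defensive.
Import Order.TTheory GRing.Theory Num.Theory.
Local Open Scope ring_scope.

Notation C := (complex Rdefinitions.R).

(* Forward iteration: fwd n = (x_n, x_{n+1}) for x_n = p x_{n-1} - q x_{n-2}. *)
Fixpoint fwd (p q x0 x1 : C) (n : nat) : C * C :=
  match n with
  | 0%N => (x0, x1)
  | m.+1 => let xy := fwd p q x0 x1 m in (xy.2, p * xy.2 - q * xy.1)
  end.

(* Backward iteration: bwd n = (x_{-n}, x_{-n+1}) for x_{n-2} = (p x_{n-1} - x_n)/q. *)
Fixpoint bwd (p q x0 x1 : C) (n : nat) : C * C :=
  match n with
  | 0%N => (x0, x1)
  | m.+1 => let xy := bwd p q x0 x1 m in ((p * xy.1 - xy.2) / q, xy.1)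
  end.

Definition lucas_seq (p q x0 x1 : C) (n : int) : C :=
  match n with
  | Posz m => (fwd p q x0 x1 m).1
  | Negz m => (bwd p q x0 x1 m.+1).1
  end.

Definition useq (p q : C) : int -> C := lucas_seq p q 0 1.

Definition hseq (p q a b : C) : int -> C :=
  lucas_seq p q (2 * b - a * p) (b * p - 2 * a * q).

From mathcomp Require Import all_boot all_order all_algebra complex Rstruct.
From mathcomp Require Import ring.
Import GRing.Theory.
Local Open Scope ring_scope.
Set Implicit Arguments.
Unset Strict Implicit.

(* Let x, y be the roots of X^2 - p X + q. The defect D(n, k) = LHS - RHS
   satisfies, in n for fixed k and in k for fixed n, the third-order linear
   recurrence with characteristic roots x^2, x y, y^2: this holds for products
   of two solutions of the recurrence of u and h, for the bisections u_(2n),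
   u_(2n+1), and for q^k h_(n-k). As q <> 0 this recurrence runs backwards too,
   so a solution vanishing at three consecutive integers vanishes everywhere,
   and D = 0 on Z^2 follows from the nine values D(n, k), 0 <= n, k <= 2. *)

Section LinearRecurrences.
Variable R : comPzRingType.
Implicit Types (s t r : R) (f g : int -> R).

Definition is_rec2 s t f := forall n, f (n + 2) = s * f (n + 1) - t * f n.

Definition is_rec3 e1 e2 e3 f :=
  forall n, f (n + 3) = e1 * f (n + 2) - e2 * f (n + 1) + e3 * f n.

Lemma eq_is_rec3 e1 e2 e3 f g : f =1 g -> is_rec3 e1 e2 e3 f -> is_rec3 e1 e2 e3 g.
Proof. by move=> eq_fg rec_f n; rewrite -!eq_fg rec_f. Qed.

Lemma is_rec3B e1 e2 e3 f g :
  is_rec3 e1 e2 e3 f -> is_rec3 e1 e2 e3 g -> is_rec3 e1 e2 e3 (fun n => f n - g n).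
Proof. by move=> rec_f rec_g n; rewrite rec_f rec_g; ring. Qed.

Lemma is_rec3Z e1 e2 e3 c f :
  is_rec3 e1 e2 e3 f -> is_rec3 e1 e2 e3 (fun n => c * f n).
Proof. by move=> rec_f n; rewrite rec_f; ring. Qed.

Lemma is_rec2_shift s t a f : is_rec2 s t f -> is_rec2 s t (fun n => f (n + a)).
Proof. by move=> rec_f n; rewrite !(addrAC n _ a) rec_f. Qed.

(* Multiplying the characteristic polynomial by X - r. *)
Lemma is_rec3_rec2 s t r f : is_rec2 s t f -> is_rec3 (s + r) (t + r * s) (r * t) f.
Proof.
move=> rec_f n.
have -> : n + 3 = n + 1 + 2 by rewrite -addrA.
have n12 : n + 1 + 1 = n + 2 by rewrite -addrA.
by rewrite rec_f n12 rec_f; ring.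
Qed.

(* If the roots of X^2 - s X + t are x and y, those of the cubic are x^2, x y, y^2. *)
Lemma is_rec3_mul s t f g :
  is_rec2 s t f -> is_rec2 s t g ->
  is_rec3 (s ^+ 2 - t) (t * (s ^+ 2 - t)) (t ^+ 3) (fun n => f n * g n).
Proof.
move=> rec_f rec_g n.
have -> : n + 3 = n + 1 + 2 by rewrite -addrA.
have n12 : n + 1 + 1 = n + 2 by rewrite -addrA.
by rewrite rec_f rec_g n12 !rec_f !rec_g; ring.
Qed.

Lemma is_rec2_double s t c f :
  is_rec2 s t f -> is_rec2 (s ^+ 2 - 2 * t) (t ^+ 2) (fun n => f (2 * n + c)).
Proof.
move=> rec_f n.
set m := 2 * n + c.
have -> : 2 * (n + 2) + c = m + 2 + 2 by rewrite /m; ring.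
have -> : 2 * (n + 1) + c = m + 2 by rewrite /m; ring.
have m12 : m + 1 + 1 = m + 2 by rewrite -addrA.
have m22 : m + 2 + 1 = m + 1 + 2 by rewrite addrAC.
by rewrite rec_f m22 rec_f m12 !rec_f; ring.
Qed.

Lemma is_rec3_double s t c f :
  is_rec2 s t f ->
  is_rec3 (s ^+ 2 - t) (t * (s ^+ 2 - t)) (t ^+ 3) (fun n => f (2 * n + c)).
Proof.
move=> /(is_rec2_double c) /(is_rec3_rec2 t).
have -> : s ^+ 2 - 2 * t + t = s ^+ 2 - t by ring.
have -> : t ^+ 2 + t * (s ^+ 2 - 2 * t) = t * (s ^+ 2 - t) by ring.
by rewrite -exprS.
Qed.

End LinearRecurrences.

(* n |-> a - n turns the roots x, y into 1/x, 1/y, and the factor t^n = (x y)^n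
   turns them back. *)
Lemma is_rec2_reflect (R : comUnitRingType) (s t : R) (a : int) (f : int -> R) :
  t \is a GRing.unit -> is_rec2 s t f -> is_rec2 s t (fun n => t ^ n * f (a - n)).
Proof.
move=> t_unit rec_f n.
have := rec_f (a - n - 2).
have -> : a - n - 2 + 2 = a - n by ring.
have -> : a - n - 2 + 1 = a - (n + 1) by ring.
have -> : a - (n + 2) = a - n - 2 by ring.
rewrite !exprzDr // expr1z => ->.
move: (t ^ n) => tn; ring.
Qed.

Section Uniqueness.
Variables (R : idomainType) (e1 e2 e3 : R).
Hypothesis e3_neq0 : e3 != 0.

Lemma is_rec3_eq0 (f : int -> R) :
  is_rec3 e1 e2 e3 f -> f 0 = 0 -> f 1 = 0 -> f 2 = 0 -> forall n, f n = 0.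
Proof.
move=> rec_f f0 f1 f2.
pose vanish3 m := [/\ f m = 0, f (m + 1) = 0 & f (m + 2) = 0].
have vanish3S m : vanish3 (m + 1) <-> vanish3 m.
  have m12 : m + 1 + 1 = m + 2 by rewrite -addrA.
  have m13 : m + 1 + 2 = m + 3 by rewrite -addrA.
  rewrite /vanish3 m12 m13 rec_f.
  split=> [[-> -> /eqP]|[-> -> ->]]; last by split=> //; ring.
  rewrite !mulr0 subr0 add0r mulf_eq0 (negbTE e3_neq0) => /eqP ->; by split.
suff vanish_all m : vanish3 m by move=> n; case: (vanish_all n).
have v0 : vanish3 0 by rewrite /vanish3 add0r.
elim/int_rec: m => [//|m|m] IHm.
- by rewrite intS addrC; apply/vanish3S.
- by apply/vanish3S; have -> : - (m.+1)%:Z + 1 = - m%:Z by rewrite intS; ring.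
Qed.

Lemma is_rec3_eq0_2d (F : int -> int -> R) :
  (forall k, is_rec3 e1 e2 e3 (F ^~ k)) -> (forall n, is_rec3 e1 e2 e3 (F n)) ->
  (forall i j : nat, (i < 3)%N -> (j < 3)%N -> F i j = 0) ->
  forall n k, F n k = 0.
Proof.
move=> rec_n rec_k F_base n.
have F_col (j : nat) : (j < 3)%N -> forall m, F m j = 0.
  by move=> j_lt3; apply: is_rec3_eq0 (rec_n j) _ _ _; apply: F_base.
by apply: is_rec3_eq0 (rec_k n) _ _ _; apply: F_col.
Qed.

End Uniqueness.

Section LucasSequences.
Variables (p q : C) (x0 x1 : C).
Local Notation x := (lucas_seq p q x0 x1).

Lemma lucas_seq_bwd1 (j : nat) : (bwd p q x0 x1 j).1 = x (- j%:Z).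
Proof. by case: j. Qed.

Lemma lucas_seq_bwd2 (j : nat) : (bwd p q x0 x1 j).2 = x (1 - j%:Z).
Proof. by case: j => [//|i] /=; rewrite lucas_seq_bwd1; congr x; ring. Qed.

Lemma lucas_seq_rec2 : q != 0 -> is_rec2 p q x.
Proof.
move=> q_neq0 [m|j].
  by rewrite -!PoszD !addnS !addn0.
rewrite NegzE.
have -> : - (j.+1)%:Z + 2 = 1 - j%:Z by rewrite intS; ring.
have -> : - (j.+1)%:Z + 1 = - j%:Z by rewrite intS; ring.
rewrite -NegzE /= lucas_seq_bwd1 lucas_seq_bwd2.
by field.
Qed.

End LucasSequences.

Section HoradamLucas.
Variables (p q a b : C).
Hypothesis q_neq0 : q != 0.
Local Notation h := (hseq p q a b).
Local Notation u := (useq p q).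
Local Notation rec3_pq := (is_rec3 (p ^+ 2 - q) (q * (p ^+ 2 - q)) (q ^+ 3)).

Definition horadam_defect (n k : int) : C :=
  h (n + k + 1) ^+ 2 - q ^ (2 * k + 1) * h (n - k) ^+ 2
  - (p ^+ 2 - 4 * q) * u (2 * k + 1)
    * ((b ^+ 2 - a ^+ 2 * q) * u (2 * n + 1) - a * q * (2 * b - a * p) * u (2 * n)).

Let rec_h : is_rec2 p q h := @lucas_seq_rec2 p q _ _ q_neq0.
Let rec_u : is_rec2 p q u := @lucas_seq_rec2 p q _ _ q_neq0.

Lemma horadam_defect_rec3_n k : rec3_pq (horadam_defect ^~ k).
Proof.
pose c := (p ^+ 2 - 4 * q) * u (2 * k + 1).
apply: (@eq_is_rec3 _ _ _ _ (fun n =>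
    h (n + (k + 1)) * h (n + (k + 1)) - q ^ (2 * k + 1) * (h (n - k) * h (n - k))
    - (c * (b ^+ 2 - a ^+ 2 * q) * u (2 * n + 1)
       - c * (a * q * (2 * b - a * p)) * u (2 * n + 0)))).
  move=> n; rewrite /horadam_defect /c addr0 addrA.
  by move: (q ^ _) => qk; ring.
apply: is_rec3B; first apply: is_rec3B.
- by apply: is_rec3_mul; apply: is_rec2_shift.
- by apply: is_rec3Z; apply: is_rec3_mul; apply: is_rec2_shift.
- by apply: is_rec3B; apply: is_rec3Z; apply: is_rec3_double.
Qed.

Lemma horadam_defect_rec3_k n : rec3_pq (horadam_defect n).
Proof.
pose c := (p ^+ 2 - 4 * q)
  * ((b ^+ 2 - a ^+ 2 * q) * u (2 * n + 1) - a * q * (2 * b - a * p) * u (2 * n)).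
have q_unit : q \is a GRing.unit by rewrite unitfE.
apply: (@eq_is_rec3 _ _ _ _ (fun k =>
    h (k + (n + 1)) * h (k + (n + 1))
    - q * ((q ^ k * h (n - k)) * (q ^ k * h (n - k))) - c * u (2 * k + 1))).
  move=> k; rewrite /horadam_defect /c.
  have -> : k + (n + 1) = n + k + 1 by ring.
  have -> : 2 * k + 1 = k + k + 1 by ring.
  rewrite !exprzDr // expr1z.
  by move: (q ^ k) => qk; ring.
apply: is_rec3B; first apply: is_rec3B.
- by apply: is_rec3_mul; apply: is_rec2_shift.
- by apply: is_rec3Z; apply: is_rec3_mul; apply: is_rec2_reflect.
- by apply: is_rec3Z; apply: is_rec3_double.
Qed.

Lemma horadam_defect_base (n k : nat) :
  (n < 3)%N -> (k < 3)%N -> horadam_defect n k = 0.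
Proof.
rewrite /horadam_defect.
(* Closed numeral indices, so that the sequences compute by simplification. *)
have -> : 2 * k%:Z + 1 = k.*2.+1 by rewrite -[in RHS]addn1 PoszD -mul2n PoszM.
case: n => [|[|[|//]]] _; case: k => [|[|[|//]]] _;
  rewrite /hseq /useq /lucas_seq /=; by field; rewrite ?q_neq0.
Qed.

End HoradamLucas.

Theorem mainTheorem15 (p q a b : C) (hq : q != 0) (n k : int) :
  hseq p q a b (n + k + 1) ^+ 2
    - q ^ (2 * k + 1) * hseq p q a b (n - k) ^+ 2
  = (p ^+ 2 - 4 * q) * useq p q (2 * k + 1)
    * ((b ^+ 2 - a ^+ 2 * q) * useq p q (2 * n + 1)
       - a * q * (2 * b - a * p) * useq p q (2 * n)).
Proof.
apply/subr0_eq; change (horadam_defect p q a b n k = 0).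
have q3_neq0 : q ^+ 3 != 0 by rewrite expf_neq0.
apply: (is_rec3_eq0_2d q3_neq0).
- exact: horadam_defect_rec3_n.
- exact: horadam_defect_rec3_k.
- exact: horadam_defect_base.
Qed.
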